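(* Let $S$ and $T$ be monoids. Then the direct product $S\times T$ is weakly right coherent if and only if both $S$ and $T$ are weakly right coherent.
   Context: A monoid $M$ is weakly right coherent (WRC) if every finitely generated right ideal of $M$ is finitely presented as a right $M$-act. (It is known that a monoid is WRC if and only if it is both right ideal Howson and finitely right equated.) A semigroup $S$ is right ideal Howson (RIH) if the intersection of any two finitely generated right ideals of $S$ is finitely generated (a right ideal $I$ is finitely generated if $I=XS^1$ for some finite $X\subseteq I$, where $S^1$ is $S$ with an identity adjoined if $S$ has none, and $S^1=S$ otherwise). For $a\in S$, the right annihilator congruence is $\mathbf{r}_S(a)=\{(s,t)\in S\times S\mid as=at\}$; $S$ is finitely right equated (FRE) if $\mathbf{r}_S(a)$ is finitely generated as a right congruence for every $a\in S$. *)

From mathcomp Require Import ssreflect ssrfun ssrbool eqtype ssrnat fintype.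
From Stdlib Require Import List.

Set Implicit Arguments.
Unset Strict Implicit.

Record monoid := Monoid {
  mcar :> Type;
  mmul : mcar -> mcar -> mcar;
  mone : mcar;
  mmulA : forall a b c, mmul a (mmul b c) = mmul (mmul a b) c;
  mmul1l : forall a, mmul mone a = a;
  mmul1r : forall a, mmul a mone = a
}.

Definition prod_monoid (S T : monoid) : monoid.
Proof.
refine (@Monoid (S * T)%type
  (fun p q => (mmul p.1 q.1, mmul p.2 q.2)) (mone S, mone T) _ _ _).
- by move=> [a1 a2] [b1 b2] [c1 c2] /=; rewrite !mmulA.
- by move=> [a1 a2] /=; rewrite !mmul1l.
- by move=> [a1 a2] /=; rewrite !mmul1r.
Defined.

Section Acts.
Variable M : monoid.

Definition is_right_ideal (I : M -> Prop) : Prop :=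
  forall a s, I a -> I (mmul a s).

Definition fg_right_ideal (I : M -> Prop) : Prop :=
  is_right_ideal I /\
  exists X : list M, forall a, I a <-> exists x s, In x X /\ a = mmul x s.

Definition free_act (n : nat) : Type := ('I_n * M)%type.
Definition free_mul (n : nat) (p : free_act n) (t : M) : free_act n :=
  (p.1, mmul p.2 t).

Inductive gen_rcong (n : nat) (H : list (free_act n * free_act n)) :
    free_act n -> free_act n -> Prop :=
| grc_base p q : In (p, q) H -> gen_rcong H p q
| grc_refl p : gen_rcong H p p
| grc_sym p q : gen_rcong H p q -> gen_rcong H q p
| grc_trans p q r : gen_rcong H p q -> gen_rcong H q r -> gen_rcong H p r
| grc_act p q t : gen_rcong H p q -> gen_rcong H (free_mul p t) (free_mul q t).

(** The right ideal I, viewed as a right M-act under right multiplication,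
    is finitely presented: there are finitely many generators n, finitely
    many relations H, and a surjective act morphism phi from the free act
    on n generators onto I whose kernel is exactly the right congruence
    generated by H (i.e. I is isomorphic to F_n / <H>). *)
Definition fp_ideal_act (I : M -> Prop) : Prop :=
  exists (n : nat) (H : list (free_act n * free_act n)) (phi : free_act n -> M),
    (forall p t, phi (free_mul p t) = mmul (phi p) t) /\
    (forall p, I (phi p)) /\
    (forall a, I a -> exists p, phi p = a) /\
    (forall p q, phi p = phi q <-> gen_rcong H p q).

Definition weakly_right_coherent : Prop :=
  forall I : M -> Prop, fg_right_ideal I -> fp_ideal_act I.

End Acts.

From mathcomp Require Import ssreflect ssrfun ssrbool eqtype ssrnat seq fintype.
From Stdlib Require Import List ClassicalEpsilon.

Set Implicit Arguments.
Unset Strict Implicit.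

(* Weak right coherence says exactly that, for every finite family x in M, the
   kernel of the act map F_n -> M, (i, s) |-> x_i s, is a finitely generated
   right congruence.  Such a kernel is generated by the annihilator relations
   of the single x_i together with generators of the intersections
   x_i M :&: x_j M, so the condition is equivalent to being finitely right
   equated and right ideal Howson; both properties are checked componentwise
   in S * T.  Conversely S and T are retracts of S * T, and the kernel
   condition descends along monoid retractions. *)

Lemma In_enum_ord n (i : 'I_n) : In i (enum 'I_n).
Proof.
have : i \in enum 'I_n by rewrite mem_enum.
elim: (enum 'I_n) => [|j s IH] //=.
by rewrite seq.in_cons => /orP [/eqP ->|/IH]; [left|right].
Qed.

Section GeneratedCongruences.
Variables (M N : monoid) (n m : nat).

Lemma gen_rcong_transport (H : list (free_act M n * free_act M n))
    (H' : list (free_act N m * free_act N m))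
    (F : free_act M n -> free_act N m) (h : M -> N) :
  (forall p t, F (free_mul p t) = free_mul (F p) (h t)) ->
  (forall p q, In (p, q) H -> gen_rcong H' (F p) (F q)) ->
  forall p q, gen_rcong H p q -> gen_rcong H' (F p) (F q).
Proof.
move=> hF hH p q; elim=> {p q} [p q /hH //|p|p q _|p q r _ pq _|p q t _] //.
- exact: grc_refl.
- exact: grc_sym.
- exact: grc_trans.
- by rewrite !hF; apply: grc_act.
Qed.

Variables (H : list (free_act M n * free_act M n)) (phi : free_act M n -> M).
Hypothesis phiM : forall p t, phi (free_mul p t) = mmul (phi p) t.
Hypothesis phiH : forall p q, In (p, q) H -> phi p = phi q.

Lemma gen_rcong_ker p q : gen_rcong H p q -> phi p = phi q.
Proof.
elim=> {p q} [p q /phiH|p|p q _ ->|p q r _ -> _ ->|p q t _ pq] //.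
by rewrite !phiM pq.
Qed.

(* A chain of relations joining two different generators must cross between
   generators at some relation, whose left side then divides [phi p]. *)
Lemma gen_rcong_cross p q : gen_rcong H p q -> p.1 != q.1 ->
  exists u w v, In (u, w) H /\ u.1 != w.1 /\ phi p = mmul (phi u) v.
Proof.
elim=> {p q} [p q pqH pq|p|p q pq IH qp|p q r pq IHpq qr IHqr pr|p q t _ IH pq].
- by exists p, q, (mone M); rewrite mmul1r.
- by rewrite eqxx.
- by rewrite -(gen_rcong_ker pq); apply: IH; rewrite eq_sym.
- case: (eqVneq p.1 q.1) => [epq|]; last exact: IHpq.
  rewrite (gen_rcong_ker pq); apply: IHqr; by rewrite -epq.
- have [u [w [v [uwH [uw e]]]]] := IH pq.
  by exists u, w, (mmul v t); rewrite phiM e mmulA.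
Qed.

End GeneratedCongruences.

Definition span_map (M : monoid) n (x : 'I_n -> M) (p : free_act M n) : M :=
  mmul (x p.1) p.2.

Lemma span_mapM (M : monoid) n (x : 'I_n -> M) p t :
  span_map x (free_mul p t) = mmul (span_map x p) t.
Proof. by rewrite /span_map mmulA. Qed.

Definition fg_kernels (M : monoid) : Prop :=
  forall n (x : 'I_n -> M), exists H,
    forall p q, span_map x p = span_map x q <-> gen_rcong H p q.

(* Tietze transformations: express the old generators through x, and add one
   relation identifying each x_j with a chosen old preimage. *)
Lemma fg_kernel_change_gens (M : monoid) n (H : list (free_act M n * free_act M n))
    (phi : free_act M n -> M) m (x : 'I_m -> M) :
  (forall p t, phi (free_mul p t) = mmul (phi p) t) ->
  (forall p q, phi p = phi q <-> gen_rcong H p q) ->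
  (forall j, exists p, phi p = x j) ->
  (forall i, exists q, phi (i, mone M) = span_map x q) ->
  exists H', forall p q, span_map x p = span_map x q <-> gen_rcong H' p q.
Proof.
move=> phiM phiH /choice [y yP] /choice [z zP].
pose rewrite_gens (p : free_act M n) := free_mul (z p.1) p.2.
have rewrite_gensM p t : rewrite_gens (free_mul p t) = free_mul (rewrite_gens p) t.
  by rewrite /rewrite_gens /free_mul /= mmulA.
have span_rewrite_gens p : span_map x (rewrite_gens p) = phi p.
  by case: p => i s; rewrite /rewrite_gens span_mapM -zP -phiM /free_mul /= mmul1l.
pose old_rels := map (fun pq => (rewrite_gens pq.1, rewrite_gens pq.2)) H.
pose new_rels := map (fun j => ((j, mone M), rewrite_gens (y j))) (enum 'I_m).
exists (old_rels ++ new_rels) => p q; split.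
- have to_old j s :
      gen_rcong (old_rels ++ new_rels) (j, s) (rewrite_gens (free_mul (y j) s)).
    have -> : (j, s) = free_mul (j, mone M) s by rewrite /free_mul /= mmul1l.
    rewrite rewrite_gensM; apply: grc_act; apply/grc_base/in_or_app; right.
    exact: (in_map (fun j => ((j, mone M), rewrite_gens (y j)))) (In_enum_ord j).
  case: p q => [j s] [l t] e.
  apply: grc_trans (to_old j s) _; apply: grc_sym; apply: grc_trans (to_old l t) _.
  apply: grc_sym; apply: (gen_rcong_transport (H := H) (h := id)) => //.
    by move=> pp qq pqH; apply/grc_base/in_or_app; left;
       exact: (in_map (fun pq => (rewrite_gens pq.1, rewrite_gens pq.2)) H (pp, qq)).
  by apply/phiH; rewrite !phiM !yP.
- apply: gen_rcong_ker => [|pp qq]; first exact: span_mapM.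
  move=> /(in_app_or old_rels) [] /in_map_iff.
  + by move=> [[u w] [[<- <-] uwH]]; rewrite !span_rewrite_gens; apply/phiH/grc_base.
  + by move=> [j [[<- <-] _]]; rewrite span_rewrite_gens yP /span_map /= mmul1r.
Qed.

Lemma wrc_iff_fg_kernels (M : monoid) : weakly_right_coherent M <-> fg_kernels M.
Proof.
split=> [wrc n x | fgk I [_ [X XP]]].
- pose I a := exists i s, a = mmul (x i) s.
  have fgI : fg_right_ideal I.
    split=> [a s [i [t ->]]|]; first by exists i, (mmul t s); rewrite mmulA.
    exists (map x (enum 'I_n)) => a; split.
    + move=> [i [s ->]]; exists (x i), s; split=> //.
      exact: in_map (In_enum_ord i).
    + by move=> [_ [s [/in_map_iff [i [<- _]] ->]]]; exists i, s.
  have [k [H [phi [phiM [phiI [phi_onto phiH]]]]]] := wrc I fgI.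
  apply: (fg_kernel_change_gens phiM phiH) => [j|i].
  + by apply: phi_onto; exists j, (mone M); rewrite mmul1r.
  + by have [j [s e]] := phiI (i, mone M); exists (j, s).
- pose x (i : 'I_(length X)) := nth i X (mone M).
  have [H HP] := fgk _ x.
  exists (length X), H, (span_map x); split; [exact: span_mapM|split; [|split=> //]].
  + move=> [i s]; apply/XP; exists (x i), s; split=> //.
    by apply: nth_In; apply/ltP.
  + move=> a /XP [y [s [/(In_nth X y (mone M)) [i [/ltP lti <-]] ->]]].
    by exists (Ordinal lti, s).
Qed.

(* The annihilator congruence r(a) on M, read on the free act 'I_1 * M. *)
Definition finitely_right_equated (M : monoid) : Prop :=
  forall a : M, exists H : list (free_act M 1 * free_act M 1),
    forall p q, mmul a p.2 = mmul a q.2 <-> gen_rcong H p q.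

(* Principal right ideals suffice, since X M :&: Y M is the union of the
   x M :&: y M; a pair w in W stands for the generator a w.1 = b w.2. *)
Definition right_ideal_howson (M : monoid) : Prop :=
  forall a b : M, exists W : list (M * M),
    (forall w, In w W -> mmul a w.1 = mmul b w.2) /\
    (forall s t, mmul a s = mmul b t ->
       exists w v, In w W /\ mmul a s = mmul (mmul a w.1) v).

Lemma fre_of_fg_kernels (M : monoid) : fg_kernels M -> finitely_right_equated M.
Proof. by move=> fgk a; apply: (fgk 1 (fun _ => a)). Qed.

Lemma ord2P (i : 'I_2) : i = ord0 \/ i = ord_max.
Proof. by case: i => [[|[|?]] lti] //; [left|right]; apply: val_inj. Qed.

Lemma rih_of_fg_kernels (M : monoid) : fg_kernels M -> right_ideal_howson M.
Proof.
move=> fgk a b.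
pose x (i : 'I_2) := if i == ord0 then a else b.
have [H HP] := fgk _ x.
have H_sym u w : In (u, w) H \/ In (w, u) H -> span_map x u = span_map x w.
  by case=> /grc_base/HP.
pose crossing (uw : free_act M 2 * free_act M 2) : list (M * M) :=
  if (uw.1.1 == ord0) && (uw.2.1 == ord_max) then (uw.1.2, uw.2.2) :: nil else nil.
pose W := flat_map crossing (H ++ map (fun uw => (uw.2, uw.1)) H).
exists W; split.
- move=> c /in_flat_map [[u w] []] /(in_app_or H) uwH.
  rewrite /crossing /=; case: eqP => // u0; case: eqP => //= w1 [<-|[]] //=.
  have := H_sym u w; rewrite /span_map u0 w1 /x /=; apply.
  by case: uwH => [|/in_map_iff [[w' u'] [[<- <-]]]]; [left|right].
- move=> s t e.
  have cross : gen_rcong H (ord0, s) (ord_max, t) by apply/HP.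
  have [u [w [v [uwH [uw /= e']]]]] :=
    gen_rcong_cross (span_mapM x) (fun p q pq => proj2 (HP p q) (grc_base pq))
      cross isT.
  have in_crossing u' w' : In (u', w') H \/ In (w', u') H -> u'.1 = ord0 ->
      w'.1 = ord_max -> In (u'.2, w'.2) W.
    move=> uwH' u0 w1; apply/in_flat_map; exists (u', w'); split.
      case: uwH' => [uwH'|wuH]; apply: in_or_app; [by left|right].
      exact: (in_map (fun uw => (uw.2, uw.1)) H (w', u')).
    by rewrite /crossing u0 w1 /=; left.
  rewrite -[mmul a s]/(span_map x (ord0, s)) e'.
  case: (ord2P u.1) (ord2P w.1) uw => u1 [] w1; rewrite u1 w1 // => _.
  - exists (u.2, w.2), v; split; first by apply: in_crossing => //; left.
    by rewrite /span_map u1.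
  - exists (w.2, u.2), v; split; first by apply: in_crossing => //; right.
    by rewrite (H_sym u w) ?/span_map ?w1 //; left.
Qed.

Section KernelRelations.
Variable M : monoid.
Variable E : M -> list (free_act M 1 * free_act M 1).
Hypothesis EP : forall a p q, mmul a p.2 = mmul a q.2 <-> gen_rcong (E a) p q.
Variable W : M -> M -> list (M * M).
Hypothesis W_sound : forall a b w, In w (W a b) -> mmul a w.1 = mmul b w.2.
Hypothesis W_complete : forall a b s t, mmul a s = mmul b t ->
  exists w v, In w (W a b) /\ mmul a s = mmul (mmul a w.1) v.
Variables (n : nat) (x : 'I_n -> M).

Definition annihilator_relations : list (free_act M n * free_act M n) :=
  flat_map (fun k => map (fun pq => ((k, pq.1.2), (k, pq.2.2))) (E (x k))) (enum 'I_n).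

Definition intersection_relations : list (free_act M n * free_act M n) :=
  flat_map (fun k => flat_map (fun l =>
    map (fun w => ((k, w.1), (l, w.2))) (W (x k) (x l))) (enum 'I_n)) (enum 'I_n).

Definition kernel_relations : list (free_act M n * free_act M n) :=
  annihilator_relations ++ intersection_relations.

Lemma gen_kernel_relations_same k s t :
  mmul (x k) s = mmul (x k) t -> gen_rcong kernel_relations (k, s) (k, t).
Proof.
move=> /(EP _ (ord0, s) (ord0, t)) st.
apply: (gen_rcong_transport (F := fun p => (k, p.2)) (h := id) _ _ st) => // p q pqE.
apply/grc_base/in_or_app; left.
apply/in_flat_map; exists k; split; first exact: In_enum_ord.
exact: (in_map (fun pq => ((k, pq.1.2), (k, pq.2.2))) _ (p, q)).
Qed.

Lemma kernel_relationsP p q :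
  span_map x p = span_map x q <-> gen_rcong kernel_relations p q.
Proof.
split.
- case: p q => [k s] [l t] /= e.
  have [w [v [wW e2]]] := W_complete e.
  have ew := W_sound wW.
  apply: (grc_trans (q := (k, mmul w.1 v))).
    by apply: gen_kernel_relations_same; rewrite mmulA.
  apply: (grc_trans (q := (l, mmul w.2 v))); last first.
    by apply: gen_kernel_relations_same; rewrite mmulA -ew -e2.
  apply: (grc_act (p := (k, w.1)) (q := (l, w.2))); apply/grc_base/in_or_app; right.
  apply/in_flat_map; exists k; split; first exact: In_enum_ord.
  apply/in_flat_map; exists l; split; first exact: In_enum_ord.
  exact: (in_map (fun w => ((k, w.1), (l, w.2))) _ w).
- apply: gen_rcong_ker => [|pp qq]; first exact: span_mapM.
  move=> /(in_app_or annihilator_relations) [] /in_flat_map [k [_]].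
  + by move=> /in_map_iff [[u w] [[<- <-] uwE]]; apply/EP/grc_base.
  + by move=> /in_flat_map [l [_ /in_map_iff [w [[<- <-] /W_sound]]]].
Qed.

End KernelRelations.

Lemma fg_kernels_of_fre_rih (M : monoid) :
  finitely_right_equated M -> right_ideal_howson M -> fg_kernels M.
Proof.
move=> /choice [E EP] rih n x.
have [W WP] := choice _ (fun ab : M * M => rih ab.1 ab.2).
exists (kernel_relations E (fun a b => W (a, b)) x).
by apply: kernel_relationsP => // [a b w /(proj1 (WP (a, b)))|a b s t /(proj2 (WP (a, b)))].
Qed.

Lemma fg_kernels_retract (M N : monoid) (f : M -> N) (g : N -> M) :
  (forall a b, f (mmul a b) = mmul (f a) (f b)) ->
  (forall a b, g (mmul a b) = mmul (g a) (g b)) ->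
  cancel g f -> fg_kernels M -> fg_kernels N.
Proof.
move=> fM gM gK fgk n x.
have [H HP] := fgk n (g \o x).
pose F (p : free_act M n) : free_act N n := (p.1, f p.2).
exists (map (fun pq => (F pq.1, F pq.2)) H) => p q; split.
- case: p q => [i s] [j t]; rewrite /span_map /= => e.
  have : gen_rcong H (i, g s) (j, g t) by apply/HP; rewrite /span_map /= -!gM e.
  move=> /(gen_rcong_transport (F := F) (h := f)); rewrite /F /= !gK; apply.
  + by move=> pp tt; rewrite /F /free_mul /= fM.
  + move=> pp qq pqH; apply: grc_base.
    exact: (in_map (fun pq => (F pq.1, F pq.2)) _ (pp, qq)).
- apply: gen_rcong_ker => [|pp qq]; first exact: span_mapM.
  move=> /in_map_iff [[u w] [[<- <-] /grc_base/HP]].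
  by rewrite /span_map /F /= => e; rewrite -(gK (x u.1)) -(gK (x w.1)) -!fM e.
Qed.

Lemma fg_kernels_fst (S T : monoid) : fg_kernels (prod_monoid S T) -> fg_kernels S.
Proof.
apply: (@fg_kernels_retract (prod_monoid S T) S fst (fun s => (s, mone T))) => // s s' /=.
by rewrite mmul1r.
Qed.

Lemma fg_kernels_snd (S T : monoid) : fg_kernels (prod_monoid S T) -> fg_kernels T.
Proof.
apply: (@fg_kernels_retract (prod_monoid S T) T snd (fun t => (mone S, t))) => // t t' /=.
by rewrite mmul1r.
Qed.

Lemma fre_prod (S T : monoid) :
  finitely_right_equated S -> finitely_right_equated T ->
  finitely_right_equated (prod_monoid S T).
Proof.
move=> freS freT [a b].
have [ES ESP] := freS a; have [ET ETP] := freT b.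
pose P := prod_monoid S T.
pose inl_rel (pq : free_act S 1 * free_act S 1) : free_act P 1 * free_act P 1 :=
  ((pq.1.1, (pq.1.2, mone T)), (pq.2.1, (pq.2.2, mone T))).
pose inr_rel (pq : free_act T 1 * free_act T 1) : free_act P 1 * free_act P 1 :=
  ((pq.1.1, (mone S, pq.1.2)), (pq.2.1, (mone S, pq.2.2))).
pose H := map inl_rel ES ++ map inr_rel ET.
have gen_inl p q t : gen_rcong ES p q -> gen_rcong H (p.1, (p.2, t)) (q.1, (q.2, t)).
  apply: (gen_rcong_transport (F := fun p => (p.1, (p.2, t)) : free_act P 1)
                              (h := fun s => (s, mone T) : P)).
    by move=> ? ?; rewrite /free_mul /= mmul1r.
  move=> p' q' pqE.
  have base : In (inl_rel (p', q')) H by apply/in_or_app; left; exact: in_map.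
  have := grc_act ((mone S, t) : P) (grc_base base).
  by rewrite /free_mul /= !mmul1r !mmul1l.
have gen_inr p q s : gen_rcong ET p q -> gen_rcong H (p.1, (s, p.2)) (q.1, (s, q.2)).
  apply: (gen_rcong_transport (F := fun p => (p.1, (s, p.2)) : free_act P 1)
                              (h := fun t => (mone S, t) : P)).
    by move=> ? ?; rewrite /free_mul /= mmul1r.
  move=> p' q' pqE.
  have base : In (inr_rel (p', q')) H by apply/in_or_app; right; exact: in_map.
  have := grc_act ((s, mone T) : P) (grc_base base).
  by rewrite /free_mul /= !mmul1r !mmul1l.
exists H => p q; split.
- case: p q => [o [s t]] [o' [s' t']] /= [e1 e2].
  apply: (grc_trans (gen_inl (o, s) (o', s') t _) (gen_inr (o', t) (o', t') s' _)).
    exact/ESP.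
  exact/ETP.
- apply: (gen_rcong_ker (phi := fun p : free_act P 1 => mmul ((a, b) : P) p.2)).
    by move=> pp u /=; rewrite !mmulA.
  move=> pp qq /(in_app_or (map inl_rel ES)) [] /in_map_iff [[u w] [[<- <-] uwE]] /=.
  + by rewrite (proj2 (ESP u w) (grc_base uwE)).
  + by rewrite (proj2 (ETP u w) (grc_base uwE)).
Qed.

Lemma rih_prod (S T : monoid) :
  right_ideal_howson S -> right_ideal_howson T ->
  right_ideal_howson (prod_monoid S T).
Proof.
move=> rihS rihT [a b] [c d].
have [WS [WS_sound WS_complete]] := rihS a c.
have [WT [WT_sound WT_complete]] := rihT b d.
pose pair_gens (w : S * S) (w' : T * T) : prod_monoid S T * prod_monoid S T :=
  ((w.1, w'.1), (w.2, w'.2)).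
exists (flat_map (fun w => map (pair_gens w) WT) WS); split.
- move=> w /in_flat_map [wS [wSW /in_map_iff [wT [<- wTW]]]] /=.
  by rewrite WS_sound // WT_sound.
- move=> [s t] [s' t'] /= [e1 e2].
  have [wS [v [wSW ->]]] := WS_complete _ _ e1.
  have [wT [v' [wTW ->]]] := WT_complete _ _ e2.
  exists (pair_gens wS wT), (v, v'); split=> //.
  apply/in_flat_map; exists wS; split=> //.
  exact: in_map.
Qed.

Lemma fg_kernels_prod (S T : monoid) :
  fg_kernels S -> fg_kernels T -> fg_kernels (prod_monoid S T).
Proof.
move=> fgS fgT; apply: fg_kernels_of_fre_rih.
- by apply: fre_prod; apply: fre_of_fg_kernels.
- by apply: rih_prod; apply: rih_of_fg_kernels.
Qed.

Theorem mainTheorem1 (S T : monoid) :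
  weakly_right_coherent (prod_monoid S T) <->
  weakly_right_coherent S /\ weakly_right_coherent T.
Proof.
rewrite !wrc_iff_fg_kernels; split=> [fgST | [fgS fgT]].
- by split; [apply: fg_kernels_fst fgST | apply: fg_kernels_snd fgST].
- exact: fg_kernels_prod.
Qed.
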